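(* Let $s,k$ be positive integers, $\vec s=(s,\dots,s)\in\mathbb{Z}_+^k$ and $n=ks$. Then there exist two $\vec s$-multipermutations $\pi,\pi'$ such that \[ \max\bigl(\mathrm{LCS}(\pi,\pi'),\ \mathrm{LCS}(\pi,\overleftarrow{\pi'})\bigr)\leq\sqrt n+s. \]
   Context: For $\vec s\in\mathbb{Z}_+^k$, an $\vec s$-multipermutation is a word over $\{1,\dots,k\}$ in which each letter $l$ appears exactly $s_l$ times. $\mathrm{LCS}(w,w')$ is the length of a longest common subsequence of words $w,w'$. For a word $w$, $\overleftarrow{w}$ denotes its reverse (the word written backward). *)

From mathcomp Require Import all_boot.
From Stdlib Require Import Reals.
Set Implicit Arguments. Unset Strict Implicit. Unset Printing Implicit Defensive.

(* Words over the alphabet {1,...,k} are represented as sequences over 'I_k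
   (letter l+1 of the paper is the ordinal l). *)

Definition is_multiperm (k : nat) (svec : 'I_k -> nat) (w : seq 'I_k) : Prop :=
  forall l : 'I_k, count_mem l w = svec l.

Definition LCS (T : eqType) (w w' : seq T) : nat :=
  \max_(m : (size w).-tuple bool | subseq (mask m w) w') size (mask m w).

From mathcomp Require Import all_boot zify.
From Stdlib Require Import Reals Lra.

Set Implicit Arguments.
Unset Strict Implicit.
Unset Printing Implicit Defensive.

(* Take b = ⌈√n⌉ and cut the alphabet into g = ⌈k/b⌉ intervals of b
   consecutive letters.  The word π lists the intervals in decreasing order,
   each one written s times in increasing order, and π' is π sorted.  A common
   subsequence of π and π' is weakly increasing, so it stays inside the s
   copies of one interval, and each repeated value costs a new copy: at most
   b - 1 + s letters.  A common subsequence of π and the reverse of π' is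
   weakly decreasing, so it takes at most one letter from each of the g s
   increasing runs of π; and (g - 1) s ≤ √n because (g - 1) b < k ≤ n / s ≤ b² / s. *)

Lemma LCS_leq_map (T : eqType) (f : T -> nat) (w w' : seq T) N :
  (forall u, subseq u (map f w) -> subseq u (map f w') -> size u <= N) ->
  LCS w w' <= N.
Proof.
move=> bound; apply/bigmax_leqP => m sub_w'; rewrite -(size_map f).
by apply: bound; [rewrite map_mask mask_subseq | exact: map_subseq].
Qed.

Lemma LCS_sort_leq (T : eqType) (f : T -> nat) (w : seq T) N :
  (forall u, subseq u (map f w) -> sorted leq u -> size u <= N) ->
  LCS w (sort (relpre f leq) w) <= N.
Proof.
move=> bound; apply: (LCS_leq_map (f := f)) => u sub; rewrite -sort_map => sub'.
exact: bound sub (subseq_sorted leq_trans sub' (sort_sorted leq_total _)).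
Qed.

Lemma LCS_rev_sort_geq (T : eqType) (f : T -> nat) (w : seq T) N :
  (forall u, subseq u (map f w) -> sorted geq u -> size u <= N) ->
  LCS w (rev (sort (relpre f leq) w)) <= N.
Proof.
move=> bound; apply: (LCS_leq_map (f := f)) => u sub; rewrite map_rev -sort_map => sub'.
apply: bound sub (@subseq_sorted _ geq (rev_trans leq_trans) _ _ sub' _).
by rewrite rev_sorted; exact: sort_sorted leq_total _.
Qed.

Lemma subseq_cat_split (T : eqType) (u x y : seq T) : subseq u (x ++ y) ->
  exists u1 u2, [/\ u = u1 ++ u2, subseq u1 x & subseq u2 y].
Proof.
move/subseqP=> [m sz ->].
exists (mask (take (size x) m) x), (mask (drop (size x) m) y).
rewrite -{1}(cat_take_drop (size x) m) mask_cat ?mask_subseq //.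
by rewrite size_takel // sz size_cat leq_addr.
Qed.

Lemma mem_flatten_nseq (T : eqType) (x : T) n l : x \in flatten (nseq n l) -> x \in l.
Proof. by case/flattenP => _ /nseqP[-> _]. Qed.

Lemma ltn_sorted_last (a : nat) (u : seq nat) : sorted ltn (a :: u) -> size u + a <= last a u.
Proof. by elim: u a => [|c u IH] a //= /andP[ac /IH]; lia. Qed.

Lemma leq_sorted_subseq_flatten (ps : seq (seq nat)) (a : nat) (u : seq nat) :
  all (sorted ltn) ps -> subseq (a :: u) (flatten ps) -> sorted leq (a :: u) ->
  size u + a < last a u + size ps.
Proof.
elim: ps a u => [|p ps IH] a u //=.
move=> /andP[p_lt ps_lt] /subseq_cat_split[[|c t1] [[|d t2] [E sub1 sub2]]] //.
- by case: E => -> ->; move/(IH _ _ ps_lt sub2); lia.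
- move: E; rewrite cats0 => -[-> ->] _.
  by have := ltn_sorted_last (subseq_sorted ltn_trans sub1 p_lt); lia.
case: E => -> -> {a u}; rewrite /= cat_path => /andP[_ /[dup] /andP[le_d _]].
move=> /path_sorted /(IH _ _ ps_lt sub2).
have := ltn_sorted_last (subseq_sorted ltn_trans sub1 p_lt).
by rewrite last_cat size_cat /=; lia.
Qed.

Lemma geq_sorted_subseq_flatten (ps : seq (seq nat)) (u : seq nat) :
  all (sorted ltn) ps -> subseq u (flatten ps) -> sorted geq u -> size u <= size ps.
Proof.
elim: ps u => [|p ps IH] u /=; first by move=> _ /eqP->.
move=> /andP[p_lt ps_lt] /subseq_cat_split[u1 [u2 [-> sub1 sub2]]].
move=> /cat_sorted2[u1_ge u2_ge]; rewrite size_cat.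
have u1_lt := subseq_sorted ltn_trans sub1 p_lt.
have : size u1 <= 1.
  case: u1 u1_lt u1_ge {sub1} => [|a [|c t]] //= /andP[lt_ac _] /andP[le_ca _].
  by have := leq_trans lt_ac le_ca; rewrite ltnn.
by move=> u1_le; rewrite -add1n leq_add // IH.
Qed.

Lemma leq_sorted_subseq_cat (x y u : seq nat) :
  {in x & y, forall a c, c < a} -> subseq u (x ++ y) -> sorted leq u ->
  subseq u x \/ subseq u y.
Proof.
move=> y_lt_x /subseq_cat_split[[|a t1] [[|c t2] [-> sub1 sub2]]];
  try by [right | left; rewrite cats0].
rewrite /= cat_path => /andP[_ /andP[le_last _]]; exfalso.
have := y_lt_x _ _ (mem_subseq sub1 (mem_last a t1)) (mem_subseq sub2 (mem_head c t2)).
by rewrite ltnNge le_last.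
Qed.

Lemma leq_sorted_subseq_nseq_iota m lo n (u : seq nat) :
  subseq u (flatten (nseq m (iota lo n))) -> sorted leq u -> size u <= n.-1 + m.
Proof.
case: u => [|a u] // sub sorted_u.
have ps_lt : all (sorted ltn) (nseq m (iota lo n)).
  by apply/allP => p /nseqP[-> _]; exact: iota_ltn_sorted.
have := leq_sorted_subseq_flatten ps_lt sub sorted_u; rewrite size_nseq.
have in_iota (z : nat) : z \in a :: u -> lo <= z < lo + n.
  by move=> /(mem_subseq sub) /mem_flatten_nseq; rewrite mem_iota.
have /andP[lo_a _] := in_iota a (mem_head a u).
have /andP[_ last_lt] := in_iota (last a u) (mem_last a u).
by rewrite /=; lia.
Qed.

Section Construction.

Variables s b : nat.

Fixpoint rows g := if g is g'.+1 then nseq s (iota (g' * b) b) ++ rows g' else [::].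

Definition blocks g := flatten (rows g).

Lemma blocksS g : blocks g.+1 = flatten (nseq s (iota (g * b) b)) ++ blocks g.
Proof. by rewrite /blocks /= flatten_cat. Qed.

Lemma mem_blocks (x : nat) g : x \in blocks g -> x < g * b.
Proof.
elim: g => // g IH; rewrite blocksS mem_cat mulSn.
by case/orP=> [/mem_flatten_nseq|/IH]; rewrite ?mem_iota; lia.
Qed.

Lemma count_blocks (x : nat) g : count_mem x (blocks g) = s * (x < g * b).
Proof.
elim: g => [|g IH]; first by rewrite muln0.
rewrite blocksS count_cat count_flatten map_nseq sumn_nseq IH.
rewrite count_uniq_mem ?iota_uniq // mem_iota.
by rewrite mulSn; lia.
Qed.

Lemma leq_sorted_subseq_blocks g (u : seq nat) :
  subseq u (blocks g) -> sorted leq u -> size u <= b.-1 + s.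
Proof.
elim: g u => [|g IH] u; first by move/eqP->.
rewrite blocksS => sub sorted_u.
have sep : {in flatten (nseq s (iota (g * b) b)) & blocks g, forall a c, c < a}.
  move=> a c /mem_flatten_nseq; rewrite mem_iota => /andP[le_a _] /mem_blocks; lia.
case: (leq_sorted_subseq_cat sep sub sorted_u) => [sub_block|sub_blocks].
  exact: leq_sorted_subseq_nseq_iota sub_block sorted_u.
exact: IH sub_blocks sorted_u.
Qed.

Lemma geq_sorted_subseq_blocks g (u : seq nat) :
  subseq u (blocks g) -> sorted geq u -> size u <= g * s.
Proof.
have rows_lt : all (sorted ltn) (rows g).
  elim: g {u} => //= g IH; rewrite all_cat IH andbT.
  by apply/allP => p /nseqP[-> _]; exact: iota_ltn_sorted.
have size_rows : size (rows g) = g * s.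
  by elim: g {u rows_lt} => //= g IH; rewrite size_cat size_nseq IH mulSn.
by rewrite -size_rows; exact: geq_sorted_subseq_flatten.
Qed.

End Construction.

Lemma ex_minn_cover (f : nat -> nat) N :
  f 0 < N -> (exists x, N <= f x) -> exists x, [/\ 0 < x, N <= f x & f x.-1 < N].
Proof.
move=> f0 ex; case: (ex_minnP ex) => x N_le min_x; exists x.
have x_gt0 : 0 < x by case: x N_le min_x => // /(leq_trans f0); rewrite ltnn.
split=> //; rewrite ltnNge; apply/negP => /min_x.
by case: x x_gt0 {N_le min_x} => //= x _; rewrite ltnn.
Qed.

Lemma count_pmap_insub k (l : 'I_k) (v : seq nat) :
  count_mem l (pmap insub v) = count_mem (val l) v.
Proof.
elim: v => //= x v IH; case: insubP => [y _ <-|x_ge] /=; rewrite IH ?val_eqE //.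
by case: eqP x_ge => // ->; rewrite ltn_ord.
Qed.

Lemma map_val_pmap_insub k (v : seq nat) :
  map val (pmap insub v : seq 'I_k) = [seq x <- v | x < k].
Proof. by rewrite (pmap_filter (insubK _)); apply: eq_filter; exact: isSome_insub. Qed.

Lemma mul_sq_leq x s k b : 0 < k * s -> x * b <= k -> k * s <= b * b ->
  (x * s) * (x * s) <= k * s.
Proof.
move=> ks_gt0 xb_le ks_le; rewrite -(leq_pmul2r ks_gt0).
have : x * s * (x * s) * (k * s) <= x * s * (x * s) * (b * b) by rewrite leq_mul2l ks_le orbT.
have : (x * b) * (x * b) <= k * k by rewrite leq_mul.
by nia.
Qed.

Lemma INR_le_sqrt_add (L X N s : nat) : L <= X + s -> X * X <= N ->
  (INR L <= sqrt (INR N) + INR s)%R.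
Proof.
move=> /leP/le_INR; rewrite plus_INR => L_le /leP/le_INR; rewrite mult_INR => sq_le.
have : (INR X <= sqrt (INR N))%R.
  by rewrite -(sqrt_square (INR X)); [exact: sqrt_le_1_alt _ _ sq_le | exact: pos_INR].
by lra.
Qed.

Theorem theorem13 (s k : nat) (hs : 0 < s) (hk : 0 < k) :
  exists pi pi' : seq 'I_k,
    is_multiperm (fun _ => s) pi /\ is_multiperm (fun _ => s) pi' /\
    (INR (maxn (LCS pi pi') (LCS pi (rev pi'))) <= sqrt (INR (k * s)) + INR s)%R.
Proof.
have ks_gt0 : 0 < k * s by rewrite muln_gt0 hk hs.
have [b [b_gt0 ks_le_bb bb_lt]] := ex_minn_cover (f := fun b => b * b) ks_gt0
  (ex_intro _ (k * s) (leq_pmull _ ks_gt0)).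
have [g [g_gt0 k_le_gb gb_lt]] := ex_minn_cover (f := fun g => g * b) hk
  (ex_intro _ k (leq_pmulr _ b_gt0)).
(* [pmap insub] drops the letters [>= k] of the last interval. *)
set pi : seq 'I_k := pmap insub (blocks s b g).
have pi_multiperm : is_multiperm (fun _ => s) pi.
  by move=> l; rewrite count_pmap_insub count_blocks (leq_trans (ltn_ord l) k_le_gb) muln1.
exists pi, (sort (relpre val leq) pi); split; [done | split].
  by move=> l; rewrite -(pi_multiperm l); apply/permP; rewrite perm_sort.
have in_blocks u : subseq u (map val pi) -> subseq u (blocks s b g).
  by rewrite map_val_pmap_insub => /subseq_trans; apply; exact: filter_subseq.
have LCS_up : LCS pi (sort (relpre val leq) pi) <= b.-1 + s.
  by apply: LCS_sort_leq => u /in_blocks; exact: leq_sorted_subseq_blocks.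
have LCS_down : LCS pi (rev (sort (relpre val leq) pi)) <= g.-1 * s + s.
  rewrite -mulSnr prednK //.
  by apply: LCS_rev_sort_geq => u /in_blocks; exact: geq_sorted_subseq_blocks.
apply: (INR_le_sqrt_add (X := maxn b.-1 (g.-1 * s))).
  by rewrite geq_max (leq_trans LCS_up) ?(leq_trans LCS_down) // leq_add2r ?leq_maxl ?leq_maxr.
have := mul_sq_leq ks_gt0 (ltnW gb_lt) ks_le_bb.
by rewrite /maxn; case: ltnP => _ //; move/ltnW: bb_lt.
Qed.
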